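(* Let $n\ge 1$ and $1\le p\le n$. Then the number of $\alpha\in\mathcal{OCT}_n$ with $h(\alpha)=p$ is $$F(n;p)=(n-p+1)\binom{n-1}{p-1}.$$
   Context: $X_n=\{1,2,\dots,n\}$ with its usual order; maps are written on the right ($x\alpha$). A map $\alpha:X_n\to X_n$ is order-preserving if $x\le y$ implies $x\alpha\le y\alpha$, and a contraction if $|x\alpha-y\alpha|\le|x-y|$ for all $x,y$. $\mathcal{OCT}_n$ is the set of all order-preserving contractions $X_n\to X_n$ (defined on all of $X_n$). Height $h(\alpha)=|\mathrm{Im}\,\alpha|$. *)

(* X_n = {1,..,n} is modelled by 'I_n = {0,..,n-1}
   (the shift x |-> x-1 is an order isomorphism preserving distances). *)
From mathcomp Require Import all_boot.
Set Implicit Arguments. Unset Strict Implicit. Unset Printing Implicit Defensive.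

Definition distn (a b : nat) : nat := (a - b) + (b - a).

Definition order_preserving n (f : {ffun 'I_n -> 'I_n}) : bool :=
  [forall x : 'I_n, forall y : 'I_n, (x <= y) ==> (f x <= f y)].

Definition contraction n (f : {ffun 'I_n -> 'I_n}) : bool :=
  [forall x : 'I_n, forall y : 'I_n, distn (f x) (f y) <= distn x y].

Definition OCT n : {set {ffun 'I_n -> 'I_n}} :=
  [set f | order_preserving f && contraction f].

Definition height n (f : {ffun 'I_n -> 'I_n}) : nat := #|[set f x | x in 'I_n]|.

From mathcomp Require Import all_boot zify.
Set Implicit Arguments. Unset Strict Implicit. Unset Printing Implicit Defensive.

(* An order-preserving contraction moves by 0 or 1 between consecutive
   points, so it is determined by its value a at 0 and by its set of
   "jumps" S, the positions i < m where f (i+1) = f i + 1: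
   f x = a + #{i in S | i < x}.  Conversely every such "staircase" map with
   a + |S| <= m is an order-preserving contraction, of height |S| + 1.
   Hence f |-> (f 0, jumps f) is a bijection between the maps of height p
   and the pairs (a, S) with a <= m + 1 - p and |S| = p - 1, which number
   (n - p + 1) * 'C(n - 1, p - 1) for n = m + 1. *)

Section CountBelow.
Variable m : nat.
Implicit Types (S : {set 'I_m}) (x : nat).

Definition count_below S x : nat := #|[set i in S | i < x]|.

Lemma count_below0 S : count_below S 0 = 0.
Proof.
apply/eqP; rewrite cards_eq0; apply/eqP/setP => i.
by rewrite !inE ltn0 andbF.
Qed.

Lemma count_belowS S x :
  count_below S x.+1 = count_below S x + [exists i in S, val i == x].
Proof.
rewrite /count_below; case: existsP => [[i /andP[iS /eqP ix]]|notin].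
- have -> : [set j in S | j < x.+1] = i |: [set j in S | j < x].
    apply/setP => j; rewrite !inE ltnS leq_eqVlt -ix.
    case: (eqVneq j i) => [->|nji]; first by rewrite iS eqxx.
    by rewrite val_eqE (negbTE nji).
  by rewrite cardsU1 !inE ix ltnn andbF addnC.
- rewrite addn0; apply: eq_card => j; rewrite !inE ltnS leq_eqVlt.
  case: (eqVneq (val j) x) => [jx|] //=.
  by case jS: (j \in S) => //; exfalso; apply: notin; exists j; rewrite jS jx eqxx.
Qed.

Lemma count_below_ord S (i : 'I_m) :
  count_below S i.+1 = count_below S i + (i \in S).
Proof.
rewrite count_belowS; congr (_ + nat_of_bool _).
apply/existsP/idP => [[j /andP[jS /eqP ji]]|iS]; first by rewrite -(val_inj ji).
by exists i; rewrite iS eqxx.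
Qed.

Lemma count_below_step S x : count_below S x.+1 <= count_below S x + 1.
Proof. by rewrite count_belowS leq_add2l; case: existsP. Qed.

Lemma count_below_card S x : count_below S x <= #|S|.
Proof. by apply: subset_leq_card; apply/subsetP => i; rewrite inE => /andP[]. Qed.

Lemma count_below_full S : count_below S m = #|S|.
Proof. by apply: eq_card => i; rewrite inE ltn_ord andbT. Qed.

Lemma count_below_mono S x y : x <= y -> count_below S x <= count_below S y.
Proof.
move=> lexy; apply: subset_leq_card; apply/subsetP => i; rewrite !inE.
by case/andP => -> /leq_trans; apply.
Qed.

Lemma count_below_lipschitz S x d : count_below S (x + d) <= count_below S x + d.
Proof.
elim: d => [|d IH]; first by rewrite !addn0.
by rewrite addnS; have := count_below_step S (x + d); lia.
Qed.

Lemma count_below_ivt S k c :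
  c <= count_below S k -> exists2 x, x <= k & count_below S x = c.
Proof.
elim: k c => [|k IH] c lec.
  by exists 0 => //; move: lec; rewrite count_below0; lia.
case: (leqP c (count_below S k)) => [/IH [x lexk <-]|ltc].
  by exists x => //; apply: leqW.
by exists k.+1 => //; have := count_below_step S k; lia.
Qed.

Definition jumps (f : {ffun 'I_m.+1 -> 'I_m.+1}) : {set 'I_m} :=
  [set i : 'I_m | f (inord i.+1) != f (inord i)].

Definition staircase (a : nat) S : {ffun 'I_m.+1 -> 'I_m.+1} :=
  [ffun x : 'I_m.+1 => inord (a + count_below S x)].

Section Staircase.
Variables (a : nat) (S : {set 'I_m}).
Hypothesis fits : a + #|S| <= m.

Lemma staircaseE (x : 'I_m.+1) : staircase a S x = a + count_below S x :> nat.
Proof. by rewrite ffunE inordK // ltnS; have := count_below_card S x; lia. Qed.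

Lemma staircase_OCT : staircase a S \in OCT m.+1.
Proof.
rewrite inE; apply/andP; split; apply/forallP => x; apply/forallP => y.
  by apply/implyP => lexy; rewrite !staircaseE leq_add2l count_below_mono.
rewrite !staircaseE /distn.
wlog lexy : x y / x <= y.
  by move=> sym; case: (leqP x y) => [|/ltnW] /sym //; lia.
have := count_below_mono S lexy.
have := count_below_lipschitz S x (y - x); rewrite subnKC //; lia.
Qed.

(* The image of the staircase is the interval [a, a + |S|]. *)
Lemma height_staircase : height (staircase a S) = #|S|.+1.
Proof.
have fitc c : c <= #|S| -> a + c < m.+1 by lia.
rewrite /height.
have -> : [set staircase a S x | x in 'I_m.+1] =
          [set (inord (a + j) : 'I_m.+1) | j : 'I_#|S|.+1].
  apply/setP => y; apply/imsetP/imsetP => [[x _ ->]|[j _ ->]].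
  - exists (Ordinal (count_below_card S x : _ < #|S|.+1)) => //.
    by apply: ord_inj; rewrite staircaseE /= inordK // fitc // count_below_card.
  - have [x lexm ejx] : exists2 x, x <= m & count_below S x = j.
      by apply: count_below_ivt; rewrite count_below_full -ltnS.
    exists (inord x) => //; apply: ord_inj.
    by rewrite staircaseE [X in count_below _ X]inordK ?ltnS // ejx inordK // fitc // -ltnS.
rewrite card_imset ?cardsT ?card_ord // => i j /(congr1 val).
have := ltn_ord i; have := ltn_ord j => ltj lti.
by rewrite /= !inordK ?fitc // -?ltnS // => eij; apply: ord_inj; lia.
Qed.

Lemma staircase_ord0 : staircase a S ord0 = a :> nat.
Proof. by rewrite staircaseE count_below0 addn0. Qed.

Lemma jumps_staircase : jumps (staircase a S) = S.
Proof.
apply/setP => i; rewrite inE -(inj_eq (@ord_inj _)) !staircaseE.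
rewrite !inordK ?ltnS ?(ltnW (ltn_ord i)) // count_below_ord.
by case: (i \in S); rewrite /= ?addn0 ?eqxx //; lia.
Qed.

End Staircase.

Lemma staircase_inj a b (S T : {set 'I_m}) : a + #|S| <= m -> b + #|T| <= m ->
  staircase a S = staircase b T -> a = b /\ S = T.
Proof.
move=> fitS fitT eST; split.
  by rewrite -(staircase_ord0 fitS) -(staircase_ord0 fitT) eST.
by rewrite -(jumps_staircase fitS) -(jumps_staircase fitT) eST.
Qed.

Section OCTisStaircase.
Variable f : {ffun 'I_m.+1 -> 'I_m.+1}.
Hypothesis f_OCT : f \in OCT m.+1.

Lemma OCT_step (i : 'I_m) : f (inord i.+1) = f (inord i) + (i \in jumps f) :> nat.
Proof.
move: f_OCT; rewrite inE => /andP[/forallP mono /forallP contr].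
have ei : (inord i : 'I_m.+1) = i :> nat by rewrite inordK // leqW.
have eSi : (inord i.+1 : 'I_m.+1) = i.+1 :> nat by rewrite inordK // ltnS.
have := implyP (forallP (mono (inord i)) (inord i.+1)).
have := forallP (contr (inord i)) (inord i.+1).
rewrite /distn ei eSi leqnSn inE => dist /(_ isT) le.
case: (eqVneq (f (inord i.+1)) (f (inord i))) => [-> /=|ne]; first lia.
have : f (inord i.+1) <> f (inord i) :> nat by move=> /ord_inj /eqP; rewrite (negbTE ne).
rewrite /=; lia.
Qed.

Lemma OCT_form x : x <= m -> f (inord x) = f ord0 + count_below (jumps f) x :> nat.
Proof.
elim: x => [|x IH] lexm.
  by rewrite count_below0 addn0; congr (nat_of_ord (f _)); apply: ord_inj; rewrite inordK.
by rewrite (OCT_step (Ordinal lexm)) IH ?(ltnW lexm) // -addnA -(count_below_ord _ (Ordinal lexm)).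
Qed.

Lemma OCT_fits : f ord0 + #|jumps f| <= m.
Proof. by rewrite -count_below_full -OCT_form // -ltnS. Qed.

Lemma OCT_staircase : f = staircase (f ord0) (jumps f).
Proof.
apply/ffunP => x; apply: ord_inj; rewrite staircaseE; last exact: OCT_fits.
by rewrite -OCT_form ?inord_val // -ltnS.
Qed.

End OCTisStaircase.

Section Count.
Variable p : nat.
Hypotheses (p_gt0 : 0 < p) (p_le : p <= m.+1).

Definition staircase_params : {set 'I_(m.+1 - p + 1) * {set 'I_m}} :=
  [set x : 'I_(m.+1 - p + 1) * {set 'I_m} | #|x.2| == p - 1].

Lemma params_fit (x : 'I_(m.+1 - p + 1) * {set 'I_m}) :
  x \in staircase_params -> x.1 + #|x.2| <= m.
Proof. by rewrite inE => /eqP card2; have := ltn_ord x.1; lia. Qed.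

Lemma OCT_height_image :
  [set f in OCT m.+1 | height f == p] =
  [set staircase x.1 x.2 | x : 'I_(m.+1 - p + 1) * {set 'I_m} in staircase_params].
Proof.
apply/setP => f; rewrite inE; apply/andP/imsetP => [[fOCT /eqP hf]|[x xP ->]].
- have fits : f ord0 + #|jumps f| <= m := OCT_fits fOCT.
  move: hf; rewrite (OCT_staircase fOCT) height_staircase // => hf.
  (* restate to normalize the coercions so that lia sees shared atoms *)
  have {}hf : #|jumps f|.+1 = p := hf.
  have lta : f ord0 < m.+1 - p + 1 by lia.
  exists (Ordinal lta, jumps f) => //.
  by rewrite inE /= -hf subn1.
- have fits := params_fit xP.
  split; first exact: staircase_OCT.
  by move: xP; rewrite inE height_staircase // => /eqP ->; rewrite subn1 prednK.
Qed.

Lemma card_OCT_height :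
  #|[set f in OCT m.+1 | height f == p]| = (m.+1 - p + 1) * 'C(m, p - 1).
Proof.
rewrite OCT_height_image card_in_imset.
  have -> : staircase_params = setX setT [set S : {set 'I_m} | #|S| == p - 1].
    by apply/setP => -[a S]; rewrite !inE.
  by rewrite cardsX cardsT card_ord card_draws card_ord.
move=> [a S] [b T] /params_fit /= fitS /params_fit /= fitT.
by case/(staircase_inj fitS fitT) => /ord_inj -> ->.
Qed.

End Count.
End CountBelow.

Theorem corollary2p7 (n p : nat) (hn : 1 <= n) (hp1 : 1 <= p) (hpn : p <= n) :
  #|[set f in OCT n | height f == p]| = (n - p + 1) * 'C(n - 1, p - 1).
Proof.
case: n hn hpn => [//|m] _ hpn.
by rewrite card_OCT_height // subSS subn0.
Qed.
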